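(* Let $J=[\alpha,\beta]$ and let $u:J\to\mathbb R$ be continuous such that $J$ is admissible for $u$. If $u(\alpha)\ge0$ and $u(\beta)\ge0$, then $u(x)\ge0$ for all $x\in J$. Analogously, if $u(\alpha)\le 0$ and $u(\beta)\le 0$, then $u(x)\le0$ for all $x\in J$.
   Context: Double crossover: a continuous $u$ has a double crossover on $[\gamma,\eta]$ if for some $\sigma\in\{\pm1\}$: $\sigma u(\gamma)\ge0$, $\sigma u((\gamma+\eta)/2)\le0$ and $\sigma u(\eta)\ge0$. Dyadic points of $J=[\alpha,\beta]$: $d_{n,k}=\alpha+(\beta-\alpha)k/2^n$, $k=0,\dots,2^n$, $n\in\mathbb N_0$; dyadic subintervals: $[d_{n,k},d_{n,k+1}]$, $k=0,\dots,2^n-1$, $n\in\mathbb N_0$. $J$ is admissible for $u$ if $u$ has no double crossover on any dyadic subinterval of $J$. *)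

From Stdlib Require Import Reals.
Open Scope R_scope.

Definition continuous_on_interval (u : R -> R) (a b : R) : Prop :=
  forall x, a <= x <= b ->
    forall eps, 0 < eps -> exists delta, 0 < delta /\
      forall y, a <= y <= b -> Rabs (y - x) < delta -> Rabs (u y - u x) < eps.

Definition double_crossover (u : R -> R) (g e : R) : Prop :=
  exists sigma : R, (sigma = 1 \/ sigma = -1) /\
    sigma * u g >= 0 /\ sigma * u ((g + e) / 2) <= 0 /\ sigma * u e >= 0.

Definition dyadic_point (a b : R) (n k : nat) : R :=
  a + (b - a) * INR k / 2 ^ n.

Definition admissible (u : R -> R) (a b : R) : Prop :=
  forall n k : nat, (k < 2 ^ n)%nat ->
    ~ double_crossover u (dyadic_point a b n k) (dyadic_point a b n (S k)).

From Stdlib Require Import Reals Lra Lia.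
Open Scope R_scope.

(* Fix a sign s = 1 or s = -1 with s*u(alpha) >= 0 and
   s*u(beta) >= 0; both halves of the theorem are the instances s = 1, -1.
   1. Dyadic points refine by bisection: d_{n+1,2k} = d_{n,k} and
      d_{n+1,2k+1} is the midpoint of [d_{n,k}, d_{n,k+1}].
   2. Sign propagation: by induction on n, s*u >= 0 at every d_{n,k}.  The
      even points are inherited from level n; at an odd point, a value with
      s*u < 0 would be a double crossover on the dyadic subinterval
      [d_{n,k}, d_{n,k+1}], which admissibility forbids.
   3. Density: every x in [alpha,beta] lies in some dyadic subinterval of
      level n (by repeated bisection), whose length (beta-alpha)/2^n tends
      to 0.
   4. Closedness: s*u is continuous, hence nonnegative at x as soon as it is
      nonnegative at points arbitrarily close to x. *)

Lemma pow2_pos (n : nat) : 0 < 2 ^ n.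
Proof. apply pow_lt; lra. Qed.

Lemma dyadic_point_first (a b : R) (n : nat) : dyadic_point a b n 0 = a.
Proof. unfold dyadic_point; simpl; pose proof (pow2_pos n); field; lra. Qed.

Lemma dyadic_point_last (a b : R) (n : nat) : dyadic_point a b n (2 ^ n) = b.
Proof.
  unfold dyadic_point; rewrite pow_INR; replace (INR 2) with 2 by (simpl; lra).
  pose proof (pow2_pos n); field; lra.
Qed.

Lemma dyadic_point_step (a b : R) (n k : nat) :
  dyadic_point a b n (S k) = dyadic_point a b n k + (b - a) / 2 ^ n.
Proof. unfold dyadic_point; rewrite S_INR; pose proof (pow2_pos n); field; lra. Qed.

Lemma dyadic_point_even (a b : R) (n k : nat) :
  dyadic_point a b (S n) (2 * k) = dyadic_point a b n k.
Proof.
  unfold dyadic_point; rewrite mult_INR; replace (INR 2) with 2 by (simpl; lra).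
  simpl (2 ^ S n).
  pose proof (pow2_pos n); field; lra.
Qed.

Lemma dyadic_point_odd (a b : R) (n k : nat) :
  dyadic_point a b (S n) (2 * k + 1) =
  (dyadic_point a b n k + dyadic_point a b n (S k)) / 2.
Proof.
  unfold dyadic_point; rewrite (S_INR k), plus_INR, mult_INR.
  replace (INR 2) with 2 by (simpl; lra); simpl (INR 1); simpl (2 ^ S n).
  pose proof (pow2_pos n); field; lra.
Qed.

Lemma sign_at_dyadic_points (u : R -> R) (a b s : R) :
  (s = 1 \/ s = -1) -> admissible u a b ->
  s * u a >= 0 -> s * u b >= 0 ->
  forall n k, (k <= 2 ^ n)%nat -> s * u (dyadic_point a b n k) >= 0.
Proof.
  intros Hs Hadm Ha Hb n; induction n as [|n IH]; intros k Hk.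
  - simpl in Hk; destruct k as [|[|k]]; try lia.
    + rewrite dyadic_point_first; exact Ha.
    + change 1%nat with (2 ^ 0)%nat; rewrite dyadic_point_last; exact Hb.
  - simpl in Hk; destruct (Nat.Even_or_Odd k) as [[m ->] | [m ->]].
    + rewrite dyadic_point_even; apply IH; lia.
    + rewrite dyadic_point_odd.
      pose proof (IH m ltac:(lia)); pose proof (IH (S m) ltac:(lia)).
      destruct (Rle_dec (s * u ((dyadic_point a b n m + dyadic_point a b n (S m)) / 2)) 0)
        as [Hmid | Hmid]; [| lra].
      exfalso; apply (Hadm n m ltac:(lia)); exists s; repeat split; assumption.
Qed.

Lemma dyadic_bracket (a b x : R) (n : nat) : a <= x <= b ->
  exists k, (k < 2 ^ n)%nat /\
    dyadic_point a b n k <= x <= dyadic_point a b n (S k).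
Proof.
  intros Hx; induction n as [|n [k [Hk [Hlo Hhi]]]].
  - exists 0%nat; split; [simpl; lia|].
    change 1%nat with (2 ^ 0)%nat; rewrite dyadic_point_first, dyadic_point_last; exact Hx.
  - destruct (Rle_dec x (dyadic_point a b (S n) (2 * k + 1))) as [Hmid | Hmid].
    + exists (2 * k)%nat; split; [simpl; lia|].
      replace (S (2 * k)) with (2 * k + 1)%nat by lia.
      rewrite dyadic_point_even; split; assumption.
    + exists (2 * k + 1)%nat; split; [simpl; lia|].
      replace (S (2 * k + 1)) with (2 * S k)%nat by lia.
      rewrite dyadic_point_even; split; [lra | assumption].
Qed.

Lemma dyadic_mesh_small (a b delta : R) : a < b -> 0 < delta ->
  exists n, (b - a) / 2 ^ n < delta.
Proof.
  intros Hab Hd.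
  destruct (pow_lt_1_zero (/ 2) ltac:(rewrite Rabs_pos_eq; lra) (delta / (b - a)))
    as [N HN]; [apply Rdiv_lt_0_compat; lra|].
  exists N; specialize (HN N (le_n N)).
  rewrite pow_inv, Rabs_pos_eq in HN by (left; apply Rinv_0_lt_compat, pow2_pos).
  pose proof (pow2_pos N).
  apply (Rmult_lt_compat_l (b - a)) in HN; [|lra].
  replace ((b - a) * (delta / (b - a))) with delta in HN by (field; lra).
  exact HN.
Qed.

Lemma dyadic_points_dense (a b x delta : R) : a < b -> a <= x <= b -> 0 < delta ->
  exists n k, (k <= 2 ^ n)%nat /\ Rabs (dyadic_point a b n k - x) < delta.
Proof.
  intros Hab Hx Hd.
  destruct (dyadic_mesh_small a b delta Hab Hd) as [n Hn].
  destruct (dyadic_bracket a b x n Hx) as [k [Hk Hbr]].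
  exists n, k; split; [lia|].
  rewrite dyadic_point_step in Hbr; apply Rabs_def1; lra.
Qed.

Lemma dyadic_point_in_interval (a b : R) (n k : nat) : a < b -> (k <= 2 ^ n)%nat ->
  a <= dyadic_point a b n k <= b.
Proof.
  intros Hab Hk; pose proof (pow2_pos n) as Hp.
  apply le_INR in Hk; rewrite pow_INR in Hk; replace (INR 2) with 2 in Hk by (simpl; lra).
  unfold dyadic_point; split.
  - pose proof (pos_INR k).
    enough (0 <= (b - a) * INR k / 2 ^ n) by lra.
    apply Rmult_le_pos; [apply Rmult_le_pos|left; apply Rinv_0_lt_compat]; lra.
  - enough ((b - a) * INR k / 2 ^ n <= b - a) by lra.
    apply (Rmult_le_reg_r (2 ^ n)); [lra|].
    unfold Rdiv; rewrite Rmult_assoc, Rinv_l, Rmult_1_r by lra.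
    apply Rmult_le_compat_l; lra.
Qed.

Lemma continuous_sign_multiple (u : R -> R) (a b s : R) : (s = 1 \/ s = -1) ->
  continuous_on_interval u a b -> continuous_on_interval (fun t => s * u t) a b.
Proof.
  intros Hs Hu x Hx eps Heps.
  destruct (Hu x Hx eps Heps) as [delta [Hdelta Hclose]].
  exists delta; split; [exact Hdelta|]; intros y Hy Hyx.
  rewrite <- Rmult_minus_distr_l, Rabs_mult.
  replace (Rabs s) with 1 by (destruct Hs as [-> | ->];
    [rewrite Rabs_R1 | rewrite Rabs_left by lra]; lra).
  rewrite Rmult_1_l; exact (Hclose y Hy Hyx).
Qed.

Lemma nonneg_of_nonneg_nearby (v : R -> R) (a b x : R) :
  continuous_on_interval v a b -> a <= x <= b ->
  (forall delta, 0 < delta ->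
     exists y, a <= y <= b /\ Rabs (y - x) < delta /\ v y >= 0) ->
  v x >= 0.
Proof.
  intros Hv Hx Hnear; apply Rnot_lt_ge; intro Hneg.
  destruct (Hv x Hx (- v x) ltac:(lra)) as [delta [Hdelta Hclose]].
  destruct (Hnear delta Hdelta) as [y [Hy [Hyx Hvy]]].
  specialize (Hclose y Hy Hyx); apply Rabs_def2 in Hclose; lra.
Qed.

Lemma sign_on_admissible_interval (u : R -> R) (a b s : R) : (s = 1 \/ s = -1) ->
  a < b -> continuous_on_interval u a b -> admissible u a b ->
  s * u a >= 0 -> s * u b >= 0 -> forall x, a <= x <= b -> s * u x >= 0.
Proof.
  intros Hs Hab Hu Hadm Ha Hb x Hx.
  apply (nonneg_of_nonneg_nearby (fun t => s * u t) a b x);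
    [exact (continuous_sign_multiple u a b s Hs Hu) | exact Hx |].
  intros delta Hdelta.
  destruct (dyadic_points_dense a b x delta Hab Hx Hdelta) as [n [k [Hk Hclose]]].
  exists (dyadic_point a b n k); split; [|split].
  - exact (dyadic_point_in_interval a b n k Hab Hk).
  - exact Hclose.
  - exact (sign_at_dyadic_points u a b s Hs Hadm Ha Hb n k Hk).
Qed.

Theorem lemma2p3 (alpha beta : R) (u : R -> R) :
  alpha < beta ->
  continuous_on_interval u alpha beta ->
  admissible u alpha beta ->
  (u alpha >= 0 -> u beta >= 0 -> forall x, alpha <= x <= beta -> u x >= 0) /\
  (u alpha <= 0 -> u beta <= 0 -> forall x, alpha <= x <= beta -> u x <= 0).
Proof.
  intros Hab Hu Hadm; split; intros Ha Hb x Hx.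
  - pose proof (sign_on_admissible_interval u alpha beta 1 (or_introl eq_refl)
      Hab Hu Hadm ltac:(lra) ltac:(lra) x Hx); lra.
  - pose proof (sign_on_admissible_interval u alpha beta (-1) (or_intror eq_refl)
      Hab Hu Hadm ltac:(lra) ltac:(lra) x Hx); lra.
Qed.
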